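(* Let $f,g\in c_{0,0}(\mathbb{Z})$ and $\alpha>0$. Then $$W^\alpha(f*g)(n)=(W_+^\alpha f_+*g_-)(n)+W_+^\alpha(f_+*g_+)(n)+(f_-*W_+^\alpha g_+)(n),\qquad n\ge0,$$ $$W^\alpha(f*g)(n)=(W_-^\alpha f_-*g_+)(n)+W_-^\alpha(f_-*g_-)(n)+(f_+*W_-^\alpha g_-)(n),\qquad n<0.$$
   Context: $c_{0,0}(\mathbb{Z})$ is the space of finitely supported complex sequences on $\mathbb{Z}$, with convolution $(f*g)(n)=\sum_{j\in\mathbb{Z}}f(n-j)g(j)$. $f_+(n)=f(n)$ for $n\ge0$, $0$ for $n<0$; $f_-(n)=0$ for $n\ge0$, $f(n)$ for $n<0$. For $\gamma\in\mathbb{R}$, $k^\gamma(0)=1$, $k^\gamma(n)=\frac{\gamma(\gamma+1)\cdots(\gamma+n-1)}{n!}$ for $n\ge1$. $W_+f(n)=f(n)-f(n+1)$, $W_-f(n)=f(n)-f(n-1)$, $W_\pm^m$ their powers. For $\alpha>0$: $W_+^{-\alpha}f(n)=\sum_{j\ge n}k^\alpha(j-n)f(j)$, $W_-^{-\alpha}f(n)=\sum_{j\le n}k^\alpha(n-j)f(j)$, $W_\pm^\alpha f=W_\pm^mW_\pm^{-(m-\alpha)}f$ with $m=[\alpha]+1$. Finally $W^\alpha f(n)=W_+^\alpha f(n)$ for $n\ge0$ and $W^\alpha f(n)=W_-^\alpha f(n)$ for $n<0$. *)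

From Stdlib Require Import Reals ZArith List ClassicalEpsilon.
Open Scope R_scope.

Definition Cplx := (R * R)%type.
Definition C0 : Cplx := (0, 0).
Definition RtoC (r : R) : Cplx := (r, 0).
Definition Cadd (a b : Cplx) : Cplx := (fst a + fst b, snd a + snd b).
Definition Copp (a : Cplx) : Cplx := (- fst a, - snd a).
Definition Csub (a b : Cplx) : Cplx := Cadd a (Copp b).
Definition Cmul (a b : Cplx) : Cplx :=
  (fst a * fst b - snd a * snd b, fst a * snd b + snd a * fst b).

Definition finsupp (h : Z -> Cplx) : Prop :=
  exists N : nat, forall n : Z, (Z.of_nat N < Z.abs n)%Z -> h n = C0.

Definition sumZN (h : Z -> Cplx) (N : nat) : Cplx :=
  fold_right Cadd C0
    (map (fun i : nat => h (Z.of_nat i - Z.of_nat N)%Z) (seq 0 (2 * N + 1))).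

(* sum over Z of a finitely supported family (the value does not depend on
   the chosen support bound); defaults to 0 if h is not finitely supported,
   which never happens in the statement. *)
Definition sumZ (h : Z -> Cplx) : Cplx :=
  match excluded_middle_informative (finsupp h) with
  | left H => sumZN h (proj1_sig (constructive_indefinite_description _ H))
  | right _ => C0
  end.

Definition conv (f g : Z -> Cplx) (n : Z) : Cplx :=
  sumZ (fun j => Cmul (f (n - j)%Z) (g j)).

Definition fplus (f : Z -> Cplx) (n : Z) : Cplx := if (0 <=? n)%Z then f n else C0.
Definition fminus (f : Z -> Cplx) (n : Z) : Cplx := if (0 <=? n)%Z then C0 else f n.

Fixpoint risefact (g : R) (n : nat) : R :=
  match n with
  | O => 1
  | S m => risefact g m * (g + INR m)
  end.
Definition kgam (g : R) (n : nat) : R := risefact g n / INR (fact n).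

Definition Wp1 (f : Z -> Cplx) (n : Z) : Cplx := Csub (f n) (f (n + 1)%Z).
Definition Wm1 (f : Z -> Cplx) (n : Z) : Cplx := Csub (f n) (f (n - 1)%Z).

Definition Wp_neg (a : R) (f : Z -> Cplx) (n : Z) : Cplx :=
  sumZ (fun j => if (n <=? j)%Z
                 then Cmul (RtoC (kgam a (Z.to_nat (j - n)))) (f j) else C0).
Definition Wm_neg (a : R) (f : Z -> Cplx) (n : Z) : Cplx :=
  sumZ (fun j => if (j <=? n)%Z
                 then Cmul (RtoC (kgam a (Z.to_nat (n - j)))) (f j) else C0).

Definition mfl (a : R) : nat := S (Z.to_nat (Int_part a)).

Definition Wp (a : R) (f : Z -> Cplx) : Z -> Cplx :=
  Nat.iter (mfl a) Wp1 (Wp_neg (INR (mfl a) - a) f).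
Definition Wm (a : R) (f : Z -> Cplx) : Z -> Cplx :=
  Nat.iter (mfl a) Wm1 (Wm_neg (INR (mfl a) - a) f).

Definition W (a : R) (f : Z -> Cplx) (n : Z) : Cplx :=
  if (0 <=? n)%Z then Wp a f n else Wm a f n.

(* Both W_+^alpha and W_-^alpha have the form D_s^m o T_G: a summation
   operator h |-> sum_j G(j - n) h(j) against a one-sided kernel G, followed by
   m first differences D_s h(n) = h(n) - h(n + s) with s = +1 or -1.  Such
   operators are linear and translation invariant, hence commute with
   convolution by finitely supported sequences.  Writing f = f_+ + f_- and
   g = g_+ + g_-, the convolution f * g splits into four pieces, and the
   operator can be moved onto one factor in the mixed pieces.  For n >= 0 the
   piece f_- * g_- vanishes on [0, oo), and W_+^alpha only reads values at
   indices >= n, so its contribution is zero; the case n < 0 is symmetric. *)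

From Stdlib Require Import Reals ZArith Lia List FunctionalExtensionality ClassicalEpsilon.
Open Scope R_scope.

Definition C1 : Cplx := (1, 0).

Lemma Cplx_ring_theory : ring_theory C0 C1 Cadd Cmul Csub Copp eq.
Proof.
  constructor; intros;
    repeat match goal with x : Cplx |- _ => destruct x end;
    unfold Csub, Cadd, Cmul, Copp, C0, C1; simpl; f_equal; ring.
Qed.

Add Ring Cplx_ring : Cplx_ring_theory.

Open Scope Z_scope.

Fixpoint isum (h : Z -> Cplx) (a : Z) (l : nat) : Cplx :=
  match l with O => C0 | S l' => Cadd (h a) (isum h (a + 1) l') end.

Lemma sumZN_isum h N : sumZN h N = isum h (- Z.of_nat N) (2 * N + 1).
Proof.
  assert (Hfold : forall l s : nat,
    fold_right Cadd C0 (map (fun i : nat => h (Z.of_nat i - Z.of_nat N)) (seq s l)) =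
    isum h (Z.of_nat s - Z.of_nat N) l).
  { induction l as [|l IH]; intros s; simpl; [reflexivity|].
    rewrite IH. f_equal. f_equal. lia. }
  unfold sumZN. rewrite Hfold. reflexivity.
Qed.

Lemma isum_eq0 h a l : (forall j, a <= j < a + Z.of_nat l -> h j = C0) -> isum h a l = C0.
Proof.
  revert a; induction l as [|l IH]; intros a Hh; simpl; [reflexivity|].
  rewrite Hh by lia. rewrite IH; [ring|]. intros j Hj. apply Hh. lia.
Qed.

Lemma isum_app h a l1 l2 :
  isum h a (l1 + l2) = Cadd (isum h a l1) (isum h (a + Z.of_nat l1) l2).
Proof.
  revert a; induction l1 as [|l1 IH]; intros a.
  - simpl. rewrite Z.add_0_r. ring.
  - replace (a + Z.of_nat (S l1)) with (a + 1 + Z.of_nat l1) by lia.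
    cbn [isum Nat.add]. rewrite IH. ring.
Qed.

Lemma isum_add h1 h2 a l :
  isum (fun j => Cadd (h1 j) (h2 j)) a l = Cadd (isum h1 a l) (isum h2 a l).
Proof. revert a; induction l as [|l IH]; intros a; simpl; [|rewrite IH]; ring. Qed.

Lemma isum_sub h1 h2 a l :
  isum (fun j => Csub (h1 j) (h2 j)) a l = Csub (isum h1 a l) (isum h2 a l).
Proof. revert a; induction l as [|l IH]; intros a; simpl; [|rewrite IH]; ring. Qed.

Lemma isum_mul_l c h a l : isum (fun j => Cmul c (h j)) a l = Cmul c (isum h a l).
Proof. revert a; induction l as [|l IH]; intros a; simpl; [|rewrite IH]; ring. Qed.

Lemma isum_mul_r c h a l : isum (fun j => Cmul (h j) c) a l = Cmul (isum h a l) c.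
Proof. revert a; induction l as [|l IH]; intros a; simpl; [|rewrite IH]; ring. Qed.

Lemma isum_shift k h a l : isum (fun j => h (j + k)) a l = isum h (a + k) l.
Proof.
  revert a; induction l as [|l IH]; intros a; simpl; [reflexivity|].
  rewrite IH. f_equal. f_equal. lia.
Qed.

Lemma isum_reflect c h a l :
  isum (fun j => h (c - j)) a l = isum h (c - (a + Z.of_nat l) + 1) l.
Proof.
  revert a; induction l as [|l IH]; intros a; [reflexivity|].
  replace (S l) with (l + 1)%nat at 3 by lia.
  rewrite isum_app. cbn [isum]. rewrite IH.
  replace (c - (a + 1 + Z.of_nat l) + 1) with (c - (a + Z.of_nat (S l)) + 1) by lia.
  replace (c - (a + Z.of_nat (S l)) + 1 + Z.of_nat l) with (c - a) by lia.
  ring.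
Qed.

Lemma isum_swap (F : Z -> Z -> Cplx) a1 l1 a2 l2 :
  isum (fun i => isum (F i) a2 l2) a1 l1 = isum (fun j => isum (fun i => F i j) a1 l1) a2 l2.
Proof.
  revert a1; induction l1 as [|l1 IH]; intros a1; simpl.
  - symmetry. apply isum_eq0. reflexivity.
  - rewrite IH, <- isum_add. reflexivity.
Qed.

Definition supported (h : Z -> Cplx) (a : Z) (l : nat) : Prop :=
  forall j, j < a \/ a + Z.of_nat l <= j -> h j = C0.

Lemma isum_widen h a l c L : supported h a l -> c <= a -> a + Z.of_nat l <= c + Z.of_nat L ->
  isum h c L = isum h a l.
Proof.
  intros Hh Hca HaL.
  replace L with (Z.to_nat (a - c) + (l + (L - Z.to_nat (a - c) - l)))%nat by lia.
  rewrite !isum_app, (isum_eq0 h c), (isum_eq0 h (c + _ + _)).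
  - replace (c + Z.of_nat (Z.to_nat (a - c))) with a by lia. ring.
  - intros j Hj. apply Hh. lia.
  - intros j Hj. apply Hh. lia.
Qed.

Lemma supported_finsupp h a l : supported h a l -> finsupp h.
Proof. intros Hh. exists (Z.to_nat (Z.abs a) + l)%nat. intros n Hn. apply Hh. lia. Qed.

Lemma finsupp_common_support h1 h2 : finsupp h1 -> finsupp h2 ->
  exists a l, supported h1 a l /\ supported h2 a l.
Proof.
  intros [N1 H1] [N2 H2]. exists (- Z.of_nat (Nat.max N1 N2)), (2 * Nat.max N1 N2 + 1)%nat.
  split; intros j Hj; [apply H1 | apply H2]; lia.
Qed.

Lemma finsupp_supported h : finsupp h -> exists a l, supported h a l.
Proof.
  intros Fh. destruct (finsupp_common_support h h Fh Fh) as (a & l & Hh & _). eauto.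
Qed.

Lemma sumZ_supported h a l : supported h a l -> sumZ h = isum h a l.
Proof.
  intros Hh. unfold sumZ.
  destruct (excluded_middle_informative (finsupp h)) as [Fh|NFh].
  2: { exfalso. exact (NFh (supported_finsupp h a l Hh)). }
  destruct (constructive_indefinite_description _ Fh) as [N HN]; simpl.
  rewrite sumZN_isum.
  set (c := Z.min a (- Z.of_nat N)).
  set (L := Z.to_nat (Z.max (a + Z.of_nat l) (Z.of_nat N + 1) - c)).
  rewrite <- (isum_widen h a l c L Hh), <- (isum_widen h _ _ c L); try lia; try reflexivity.
  intros j Hj. apply HN. lia.
Qed.

Lemma sumZ_eq0 h : (forall j, h j = C0) -> sumZ h = C0.
Proof. intros Hh. rewrite (sumZ_supported h 0 0); [reflexivity|]. intros j _. apply Hh. Qed.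

Lemma finsupp_add h1 h2 : finsupp h1 -> finsupp h2 -> finsupp (fun j => Cadd (h1 j) (h2 j)).
Proof.
  intros F1 F2. destruct (finsupp_common_support h1 h2 F1 F2) as (a & l & H1 & H2).
  apply (supported_finsupp _ a l). intros j Hj. rewrite H1, H2 by exact Hj. ring.
Qed.

Lemma finsupp_mul_l u h : finsupp h -> finsupp (fun j => Cmul (u j) (h j)).
Proof. intros [N HN]. exists N. intros n Hn. rewrite HN by exact Hn. ring. Qed.

Lemma finsupp_mul_r u h : finsupp h -> finsupp (fun j => Cmul (h j) (u j)).
Proof. intros [N HN]. exists N. intros n Hn. rewrite HN by exact Hn. ring. Qed.

Lemma sumZ_add h1 h2 : finsupp h1 -> finsupp h2 ->
  sumZ (fun j => Cadd (h1 j) (h2 j)) = Cadd (sumZ h1) (sumZ h2).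
Proof.
  intros F1 F2. destruct (finsupp_common_support h1 h2 F1 F2) as (a & l & H1 & H2).
  rewrite (sumZ_supported h1 a l H1), (sumZ_supported h2 a l H2), (sumZ_supported _ a l).
  - apply isum_add.
  - intros j Hj. rewrite H1, H2 by exact Hj. ring.
Qed.

Lemma sumZ_sub h1 h2 : finsupp h1 -> finsupp h2 ->
  sumZ (fun j => Csub (h1 j) (h2 j)) = Csub (sumZ h1) (sumZ h2).
Proof.
  intros F1 F2. destruct (finsupp_common_support h1 h2 F1 F2) as (a & l & H1 & H2).
  rewrite (sumZ_supported h1 a l H1), (sumZ_supported h2 a l H2), (sumZ_supported _ a l).
  - apply isum_sub.
  - intros j Hj. rewrite H1, H2 by exact Hj. ring.
Qed.

Lemma sumZ_mul_l c h : finsupp h -> sumZ (fun j => Cmul c (h j)) = Cmul c (sumZ h).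
Proof.
  intros Fh. destruct (finsupp_supported h Fh) as (a & l & Hh).
  rewrite (sumZ_supported h a l Hh), (sumZ_supported _ a l).
  - apply isum_mul_l.
  - intros j Hj. rewrite Hh by exact Hj. ring.
Qed.

Lemma sumZ_mul_r c h : finsupp h -> sumZ (fun j => Cmul (h j) c) = Cmul (sumZ h) c.
Proof.
  intros Fh. destruct (finsupp_supported h Fh) as (a & l & Hh).
  rewrite (sumZ_supported h a l Hh), (sumZ_supported _ a l).
  - apply isum_mul_r.
  - intros j Hj. rewrite Hh by exact Hj. ring.
Qed.

Lemma sumZ_shift k h : finsupp h -> sumZ (fun j => h (j + k)) = sumZ h.
Proof.
  intros Fh. destruct (finsupp_supported h Fh) as (a & l & Hh).
  rewrite (sumZ_supported h a l Hh), (sumZ_supported _ (a - k) l).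
  - rewrite isum_shift. f_equal. lia.
  - intros j Hj. apply Hh. lia.
Qed.

Lemma sumZ_reflect c h : finsupp h -> sumZ (fun j => h (c - j)) = sumZ h.
Proof.
  intros Fh. destruct (finsupp_supported h Fh) as (a & l & Hh).
  rewrite (sumZ_supported h a l Hh), (sumZ_supported _ (c - (a + Z.of_nat l) + 1) l).
  - rewrite isum_reflect. f_equal. lia.
  - intros j Hj. apply Hh. lia.
Qed.

Lemma sumZ_swap (F : Z -> Z -> Cplx) a1 l1 a2 l2 :
  (forall i j, i < a1 \/ a1 + Z.of_nat l1 <= i \/ j < a2 \/ a2 + Z.of_nat l2 <= j ->
     F i j = C0) ->
  sumZ (fun i => sumZ (F i)) = sumZ (fun j => sumZ (fun i => F i j)).
Proof.
  intros HF.
  assert (Hrow : forall i, sumZ (F i) = isum (F i) a2 l2).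
  { intros i. apply sumZ_supported. intros j Hj. apply HF. lia. }
  assert (Hcol : forall j, sumZ (fun i => F i j) = isum (fun i => F i j) a1 l1).
  { intros j. apply sumZ_supported. intros i Hi. apply HF. lia. }
  rewrite (functional_extensionality _ _ Hrow), (functional_extensionality _ _ Hcol).
  rewrite (sumZ_supported _ a1 l1), (sumZ_supported _ a2 l2).
  - apply isum_swap.
  - intros j Hj. apply isum_eq0. intros i _. apply HF. lia.
  - intros i Hi. apply isum_eq0. intros j _. apply HF. lia.
Qed.

Lemma conv_supported a b aa la ba lb : supported a aa la -> supported b ba lb ->
  supported (conv a b) (aa + ba) (la + lb).
Proof.
  intros Ha Hb n Hn. unfold conv. apply sumZ_eq0. intros j.
  destruct (Z.lt_ge_cases j ba), (Z.lt_ge_cases j (ba + Z.of_nat lb)).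
  - rewrite Hb by lia. ring.
  - lia.
  - rewrite Ha by lia. ring.
  - rewrite Hb by lia. ring.
Qed.

Lemma finsupp_conv a b : finsupp a -> finsupp b -> finsupp (conv a b).
Proof.
  intros Fa Fb. destruct (finsupp_supported a Fa) as (aa & la & Ha).
  destruct (finsupp_supported b Fb) as (ba & lb & Hb).
  exact (supported_finsupp _ _ _ (conv_supported a b aa la ba lb Ha Hb)).
Qed.

Lemma conv_comm a b n : finsupp b -> conv a b n = conv b a n.
Proof.
  intros Fb. unfold conv.
  rewrite <- (sumZ_reflect n (fun j => Cmul (a (n - j)) (b j))) by (apply finsupp_mul_l; exact Fb).
  f_equal. apply functional_extensionality. intros j.
  replace (n - (n - j)) with j by lia. ring.
Qed.

Lemma conv_add_l f1 f2 g n : finsupp g ->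
  conv (fun k => Cadd (f1 k) (f2 k)) g n = Cadd (conv f1 g n) (conv f2 g n).
Proof.
  intros Fg. unfold conv. rewrite <- sumZ_add by (apply finsupp_mul_l; exact Fg).
  f_equal. apply functional_extensionality. intros j. ring.
Qed.

Lemma conv_add_r f g1 g2 n : finsupp g1 -> finsupp g2 ->
  conv f (fun k => Cadd (g1 k) (g2 k)) n = Cadd (conv f g1 n) (conv f g2 n).
Proof.
  intros F1 F2. unfold conv. rewrite <- sumZ_add by (apply finsupp_mul_l; assumption).
  f_equal. apply functional_extensionality. intros j. ring.
Qed.

Definition kernel_op (G h : Z -> Cplx) (n : Z) : Cplx := sumZ (fun j => Cmul (G (j - n)) (h j)).

Definition diff_op (s : Z) (h : Z -> Cplx) (n : Z) : Cplx := Csub (h n) (h (n + s)).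

Lemma kernel_op_add G h1 h2 n : finsupp h1 -> finsupp h2 ->
  kernel_op G (fun k => Cadd (h1 k) (h2 k)) n = Cadd (kernel_op G h1 n) (kernel_op G h2 n).
Proof.
  intros F1 F2. unfold kernel_op.
  rewrite <- sumZ_add by (apply finsupp_mul_l; assumption).
  f_equal. apply functional_extensionality. intros j. ring.
Qed.

Lemma kernel_op_conv G a b : finsupp a -> finsupp b ->
  kernel_op G (conv a b) = conv (kernel_op G a) b.
Proof.
  intros Fa Fb. apply functional_extensionality. intros n.
  destruct (finsupp_supported a Fa) as (aa & la & Ha).
  destruct (finsupp_supported b Fb) as (ba & lb & Hb).
  set (F j i := Cmul (G (j - n)) (Cmul (a (j - i)) (b i))).
  assert (Hleft : forall j, Cmul (G (j - n)) (conv a b j) = sumZ (F j)).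
  { intros j. unfold conv, F. rewrite sumZ_mul_l; [reflexivity|].
    apply finsupp_mul_l. exact Fb. }
  assert (Hright : forall i, Cmul (kernel_op G a (n - i)) (b i) = sumZ (fun j => F j i)).
  { intros i. unfold kernel_op, F.
    rewrite <- sumZ_mul_r by (apply finsupp_mul_l; exact Fa).
    rewrite <- (sumZ_shift (- i)) by (apply finsupp_mul_r, finsupp_mul_l; exact Fa).
    f_equal. apply functional_extensionality. intros j.
    replace (j + - i - (n - i)) with (j - n) by lia.
    replace (j + - i) with (j - i) by lia. ring. }
  unfold kernel_op at 1, conv at 2.
  rewrite (functional_extensionality _ _ Hleft), (functional_extensionality _ _ Hright).
  apply (sumZ_swap F (aa + ba) (la + lb) ba lb).
  intros j i Hji. unfold F.
  destruct (Z.lt_ge_cases i ba), (Z.lt_ge_cases i (ba + Z.of_nat lb)).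
  - rewrite Hb by lia. ring.
  - lia.
  - rewrite Ha by lia. ring.
  - rewrite Hb by lia. ring.
Qed.

Lemma diff_op_conv s a b : finsupp b -> diff_op s (conv a b) = conv (diff_op s a) b.
Proof.
  intros Fb. apply functional_extensionality. intros n. unfold diff_op, conv.
  rewrite <- sumZ_sub by (apply finsupp_mul_l; exact Fb).
  f_equal. apply functional_extensionality. intros j.
  replace (n - j + s) with (n + s - j) by lia. ring.
Qed.

Definition diff_kernel_op (m : nat) (s : Z) (G h : Z -> Cplx) : Z -> Cplx :=
  Nat.iter m (diff_op s) (kernel_op G h).

Lemma diff_kernel_op_add m s G h1 h2 n : finsupp h1 -> finsupp h2 ->
  diff_kernel_op m s G (fun k => Cadd (h1 k) (h2 k)) n =
  Cadd (diff_kernel_op m s G h1 n) (diff_kernel_op m s G h2 n).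
Proof.
  intros F1 F2. unfold diff_kernel_op. revert n.
  induction m as [|m IH]; intros n; simpl.
  - apply kernel_op_add; assumption.
  - unfold diff_op at 1 3 5. rewrite !IH. ring.
Qed.

Lemma diff_kernel_op_conv m s G a b : finsupp a -> finsupp b ->
  diff_kernel_op m s G (conv a b) = conv (diff_kernel_op m s G a) b.
Proof.
  intros Fa Fb. unfold diff_kernel_op.
  induction m as [|m IH]; simpl.
  - apply kernel_op_conv; assumption.
  - rewrite IH. apply diff_op_conv. exact Fb.
Qed.

Section ConvCommutingOperator.

Variable T : (Z -> Cplx) -> Z -> Cplx.

Hypothesis T_add : forall h1 h2 n, finsupp h1 -> finsupp h2 ->
  T (fun k => Cadd (h1 k) (h2 k)) n = Cadd (T h1 n) (T h2 n).

Hypothesis T_conv : forall a b, finsupp a -> finsupp b -> T (conv a b) = conv (T a) b.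

Lemma op_conv_r a b n : finsupp a -> finsupp b -> T (conv a b) n = conv a (T b) n.
Proof.
  intros Fa Fb.
  replace (conv a b) with (conv b a)
    by (apply functional_extensionality; intros k; apply conv_comm; exact Fa).
  rewrite T_conv by assumption. apply conv_comm. exact Fa.
Qed.

Lemma op_conv_split f1 f2 g1 g2 n :
  finsupp f1 -> finsupp f2 -> finsupp g1 -> finsupp g2 ->
  T (conv (fun k => Cadd (f1 k) (f2 k)) (fun k => Cadd (g1 k) (g2 k))) n =
  Cadd (Cadd (Cadd (conv (T f1) g2 n) (T (conv f1 g1) n)) (conv f2 (T g1) n))
       (T (conv f2 g2) n).
Proof.
  intros Ff1 Ff2 Fg1 Fg2.
  assert (Hexpand : conv (fun k => Cadd (f1 k) (f2 k)) (fun k => Cadd (g1 k) (g2 k)) =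
    fun k => Cadd (Cadd (conv f1 g2 k) (conv f1 g1 k)) (Cadd (conv f2 g1 k) (conv f2 g2 k))).
  { apply functional_extensionality. intros k.
    rewrite conv_add_l, !conv_add_r by (try apply finsupp_add; assumption). ring. }
  rewrite Hexpand, !T_add by (repeat apply finsupp_add; apply finsupp_conv; assumption).
  rewrite (T_conv f1 g2), (op_conv_r f2 g1) by assumption. ring.
Qed.

End ConvCommutingOperator.

Lemma diff_kernel_op_vanish_above m s G h N : 0 <= s ->
  (forall d, d < 0 -> G d = C0) -> (forall j, N <= j -> h j = C0) ->
  forall n, N <= n -> diff_kernel_op m s G h n = C0.
Proof.
  intros Hs HG Hh. unfold diff_kernel_op.
  induction m as [|m IH]; intros n Hn; simpl.
  - unfold kernel_op. apply sumZ_eq0. intros j.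
    destruct (Z.lt_ge_cases j n); [rewrite HG by lia | rewrite Hh by lia]; ring.
  - unfold diff_op at 1. rewrite !IH by lia. ring.
Qed.

Lemma diff_kernel_op_vanish_below m s G h N : s <= 0 ->
  (forall d, 0 < d -> G d = C0) -> (forall j, j <= N -> h j = C0) ->
  forall n, n <= N -> diff_kernel_op m s G h n = C0.
Proof.
  intros Hs HG Hh. unfold diff_kernel_op.
  induction m as [|m IH]; intros n Hn; simpl.
  - unfold kernel_op. apply sumZ_eq0. intros j.
    destruct (Z.lt_ge_cases n j); [rewrite HG by lia | rewrite Hh by lia]; ring.
  - unfold diff_op at 1. rewrite !IH by lia. ring.
Qed.

Definition kgam_fwd (b : R) (d : Z) : Cplx :=
  if 0 <=? d then RtoC (kgam b (Z.to_nat d)) else C0.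

Definition kgam_bwd (b : R) (d : Z) : Cplx :=
  if d <=? 0 then RtoC (kgam b (Z.to_nat (- d))) else C0.

Lemma kgam_fwd_neg b d : d < 0 -> kgam_fwd b d = C0.
Proof. intros Hd. unfold kgam_fwd. destruct (Z.leb_spec 0 d); [lia | reflexivity]. Qed.

Lemma kgam_bwd_pos b d : 0 < d -> kgam_bwd b d = C0.
Proof. intros Hd. unfold kgam_bwd. destruct (Z.leb_spec d 0); [lia | reflexivity]. Qed.

Lemma Wp_diff_kernel_op a h :
  Wp a h = diff_kernel_op (mfl a) 1 (kgam_fwd (INR (mfl a) - a)) h.
Proof.
  unfold Wp, diff_kernel_op. f_equal.
  apply functional_extensionality. intros n. unfold Wp_neg, kernel_op.
  f_equal. apply functional_extensionality. intros j. unfold kgam_fwd.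
  destruct (Z.leb_spec n j), (Z.leb_spec 0 (j - n)); try lia; [reflexivity | ring].
Qed.

Lemma Wm_diff_kernel_op a h :
  Wm a h = diff_kernel_op (mfl a) (-1) (kgam_bwd (INR (mfl a) - a)) h.
Proof.
  unfold Wm, diff_kernel_op. f_equal.
  apply functional_extensionality. intros n. unfold Wm_neg, kernel_op.
  f_equal. apply functional_extensionality. intros j. unfold kgam_bwd.
  destruct (Z.leb_spec j n), (Z.leb_spec (j - n) 0); try lia; [|ring].
  replace (- (j - n)) with (n - j) by lia. reflexivity.
Qed.

Lemma fplus_add_fminus f : (fun k => Cadd (fplus f k) (fminus f k)) = f.
Proof.
  apply functional_extensionality. intros k. unfold fplus, fminus.
  destruct (0 <=? k); ring.
Qed.

Lemma fminus_add_fplus f : (fun k => Cadd (fminus f k) (fplus f k)) = f.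
Proof.
  apply functional_extensionality. intros k. unfold fplus, fminus.
  destruct (0 <=? k); ring.
Qed.

Lemma finsupp_fplus f : finsupp f -> finsupp (fplus f).
Proof. intros [N HN]. exists N. intros n Hn. unfold fplus. destruct (0 <=? n); auto. Qed.

Lemma finsupp_fminus f : finsupp f -> finsupp (fminus f).
Proof. intros [N HN]. exists N. intros n Hn. unfold fminus. destruct (0 <=? n); auto. Qed.

Lemma conv_fminus_vanish f g n : 0 <= n -> conv (fminus f) (fminus g) n = C0.
Proof.
  intros Hn. unfold conv. apply sumZ_eq0. intros j. unfold fminus.
  destruct (Z.leb_spec 0 j), (Z.leb_spec 0 (n - j)); try lia; ring.
Qed.

Lemma conv_fplus_vanish f g n : n <= -1 -> conv (fplus f) (fplus g) n = C0.
Proof.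
  intros Hn. unfold conv. apply sumZ_eq0. intros j. unfold fplus.
  destruct (Z.leb_spec 0 j), (Z.leb_spec 0 (n - j)); try lia; ring.
Qed.

Close Scope Z_scope.

Theorem lemma2p10 (f g : Z -> Cplx) (alpha : R) :
  finsupp f -> finsupp g -> 0 < alpha ->
  (forall n : Z, (0 <= n)%Z ->
     W alpha (conv f g) n =
     Cadd (Cadd (conv (Wp alpha (fplus f)) (fminus g) n)
                (Wp alpha (conv (fplus f) (fplus g)) n))
          (conv (fminus f) (Wp alpha (fplus g)) n)) /\
  (forall n : Z, (n < 0)%Z ->
     W alpha (conv f g) n =
     Cadd (Cadd (conv (Wm alpha (fminus f)) (fplus g) n)
                (Wm alpha (conv (fminus f) (fminus g)) n))
          (conv (fplus f) (Wm alpha (fminus g)) n)).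
Proof.
  intros Ff Fg _.
  pose proof (finsupp_fplus f Ff) as Ffp. pose proof (finsupp_fminus f Ff) as Ffm.
  pose proof (finsupp_fplus g Fg) as Fgp. pose proof (finsupp_fminus g Fg) as Fgm.
  split; intros n Hn; unfold W.
  - rewrite (proj2 (Z.leb_le 0 n) Hn), !Wp_diff_kernel_op.
    rewrite <- (fplus_add_fminus f), <- (fplus_add_fminus g) at 1.
    rewrite (op_conv_split _ (diff_kernel_op_add _ _ _) (diff_kernel_op_conv _ _ _))
      by assumption.
    rewrite (diff_kernel_op_vanish_above _ 1 _ (conv (fminus f) (fminus g)) 0
               ltac:(lia) (kgam_fwd_neg _) (conv_fminus_vanish f g) n Hn).
    ring.
  - rewrite (proj2 (Z.leb_gt 0 n) Hn), !Wm_diff_kernel_op.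
    rewrite <- (fminus_add_fplus f), <- (fminus_add_fplus g) at 1.
    rewrite (op_conv_split _ (diff_kernel_op_add _ _ _) (diff_kernel_op_conv _ _ _))
      by assumption.
    rewrite (diff_kernel_op_vanish_below _ (-1) _ (conv (fplus f) (fplus g)) (-1)
               ltac:(lia) (kgam_bwd_pos _) (conv_fplus_vanish f g) n ltac:(lia)).
    ring.
Qed.
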